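(* Let $Y_1,\ldots,Y_n$ be i.i.d. Bernoulli with parameter $p=\mathbb{P}[Y_\ell=1]\in[0,\tfrac12]$, and let $\hat p(n)=\frac1n\sum_{\ell=1}^n\mathbb{1}\{Y_\ell=1\}$. Let $\delta\in(0,\tfrac12]$. If $n\geq 200\log(\frac4\delta)$, then with probability larger than $1-\delta$, \[ |h_b(\hat p(n))-h_b(p)|\leq \mathrm{UCD}_{\mathrm{ber}}(\hat p(n),\delta,n), \] where \[ \mathrm{UCD}_{\mathrm{ber}}(q,\delta,n):=\sqrt{\frac{12q\log(\frac6\delta)}{n}}\log\Bigl(\frac{n}{q\log(\frac6\delta)}\Bigr)+\frac{18\log(\frac6\delta)\log(n)}{n}, \] with the first term interpreted as $0$ when $q=0$.
   Context: $h_b(p):=-p\log p-(1-p)\log(1-p)$ is the binary entropy function (natural logarithm, $0\log 0=0$). *)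

From HB Require Import structures.
From mathcomp Require Import all_boot all_order all_algebra.
From mathcomp Require Import all_classical all_reals all_analysis.
Set Implicit Arguments. Unset Strict Implicit. Unset Printing Implicit Defensive.
Import Order.TTheory GRing.Theory Num.Theory.
Local Open Scope ring_scope.

Definition xlnx {R : realType} (x : R) : R := if x == 0 then 0 else x * ln x.

Definition hb {R : realType} (p : R) : R := - xlnx p - xlnx (1 - p).

(* Law of n i.i.d. Bernoulli(p) samples Y_1..Y_n, on the finite sample
   space {ffun 'I_n -> bool} (true = "Y_l = 1"):
   P[{y}] = prod_l (if y l then p else 1 - p). *)
Definition bern_weight {R : realType} (p : R) (n : nat)
  (y : {ffun 'I_n -> bool}) : R :=
  \prod_(l < n) (if y l then p else 1 - p).

Definition bern_prob {R : realType} (p : R) (n : nat)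
  (A : pred {ffun 'I_n -> bool}) : R :=
  \sum_(y | A y) bern_weight p y.

Definition phat {R : realType} (n : nat) (y : {ffun 'I_n -> bool}) : R :=
  (\sum_(l < n) (y l : nat)%:R) / n%:R.

Definition UCD_ber {R : realType} (q delta : R) (n : nat) : R :=
  (if q == 0 then 0
   else Num.sqrt (12 * q * ln (6 / delta) / n%:R)
        * ln (n%:R / (q * ln (6 / delta))))
  + 18 * ln (6 / delta) * ln (n%:R : R) / n%:R.

From HB Require Import structures.
From mathcomp Require Import all_boot all_order all_algebra.
From mathcomp Require Import all_classical all_reals all_analysis.
From mathcomp Require Import ring lra.
Set Implicit Arguments. Unset Strict Implicit. Unset Printing Implicit Defensive.
Import Order.TTheory GRing.Theory Num.Theory.
Local Open Scope ring_scope.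

(* Write [L = log (6 / delta)].  A Chernoff bound whose parameter is tuned to
   the variance gives [(n phat - n p)^2 <= 8 L (n p + 2 L)] outside an event of
   probability at most [2 exp (- L) = delta / 3].  Solving this quadratic
   inequality for [p] bounds the deviation by the observable quantity
   [4 sqrt (L phat / n) + 10 L / n].  Finally [h_b] admits the subadditive
   modulus of continuity [x - x log x] on [0, 1], and evaluating it on the two
   parts of the deviation yields the two terms of [UCD_ber]. *)

Lemma ln_ler_pos (R : realType) (x y : R) : 0 < x -> x <= y -> ln x <= ln y.
Proof. by move=> x0 xy; rewrite ler_ln ?posrE // (lt_le_trans x0). Qed.

Lemma ln4_ge1 (R : realType) : 1 <= ln (4 : R).
Proof.
have e_half : expR (1 / 2 : R) <= 2.
  have := expR_ge1Dx (- (1 / 2) : R); rewrite expRN.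
  have e0 : 0 < expR (1 / 2 : R) := expR_gt0 _.
  have -> : 1 + - (1 / 2) = (2 : R)^-1 by lra.
  by rewrite lef_pV2 ?posrE.
rewrite -[X in X <= _](expRK 1) ln_ler_pos ?expR_gt0 //.
have -> : (1 : R) = 1 / 2 + 1 / 2 by lra.
by rewrite expRD; have := expR_gt0 (1 / 2 : R); nra.
Qed.

Lemma ln_6_div_bounds (R : realType) (delta : R) : 0 < delta -> delta <= 1 / 2 ->
  1 <= ln (6 / delta) <= 2 * ln (4 / delta).
Proof.
move=> d0 d_small; have big : 8 <= 4 / delta by rewrite ler_pdivlMr //; lra.
have -> : 6 / delta = 3 / 2 * (4 / delta) by field; rewrite gt_eqF.
rewrite lnM ?posrE ?divr_gt0 //.
have : ln (3 / 2 : R) <= ln (4 / delta) by apply: ln_ler_pos; lra.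
have : 1 <= ln (4 / delta) by apply: (le_trans (ln4_ge1 R)); apply: ln_ler_pos; lra.
have : 0 <= ln (3 / 2 : R) by apply: ln_ge0; lra.
by move=> *; apply/andP; split; lra.
Qed.

Lemma empirical_dev_le (R : realFieldType) (p q r a : R) :
  0 <= p -> 0 <= q -> 0 < r -> 0 <= a -> a ^+ 2 = r * q ->
  (q - p) ^+ 2 <= 8 * r * (p + 2 * r) -> `|q - p| <= 4 * a + 10 * r.
Proof.
move=> p0 q0 r0 a0 a2 dev.
have [pq|qp] := leP p q.
  rewrite ger0_norm ?subr_ge0 //.
  have : 8 * r * (p + 2 * r) <= 8 * r * (q + 2 * r) by rewrite ler_pM2l ?lerD2r ?mulr_gt0.
  rewrite -ler_sqr ?nnegrE ?subr_ge0 //; nra.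
rewrite ltr0_norm ?subr_lt0 // opprB leNgt; apply/negP => big.
have : 0 < (p - q - (4 * a + 10 * r)) * (p - q + (4 * a + 10 * r) - 8 * r).
  by apply: mulr_gt0; lra.
have -> : p = q + (p - q) by ring.
move: dev; rewrite -sqrrN opprB; nra.
Qed.

Section EntropyModulus.
Variable R : realType.
Implicit Types a b c d x : R.

Lemma xlnx0 : xlnx (0 : R) = 0.
Proof. by rewrite /xlnx eqxx. Qed.

Lemma gt0_xlnx x : 0 < x -> xlnx x = x * ln x.
Proof. by move=> x0; rewrite /xlnx gt_eqF. Qed.

Lemma ln_sub_le x y : 0 < x -> 0 < y -> ln y - ln x <= (y - x) / x.
Proof.
move=> x0 y0; rewrite -ln_div ?posrE //.
have yx0 : 0 < y / x by apply: divr_gt0.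
have -> : y / x = 1 + (y - x) / x by rewrite mulrBl divff ?gt_eqF //; lra.
by apply: le_ln1Dx; rewrite mulrBl divff ?gt_eqF //; lra.
Qed.

Lemma xlnxD_ge x d : 0 <= x -> 0 <= d -> xlnx x + xlnx d <= xlnx (x + d).
Proof.
rewrite le0r => /orP[/eqP->|x0]; first by rewrite xlnx0 !add0r.
rewrite le0r => /orP[/eqP->|d0]; first by rewrite xlnx0 !addr0.
have xd0 : 0 < x + d by rewrite addr_gt0.
rewrite !gt0_xlnx // mulrDl lerD // ler_pM2l // ln_ler_pos //.
  by rewrite lerDl ltW.
by rewrite lerDr ltW.
Qed.

(* [x ln ((x + d) / x) <= d], and [ln (x + d) <= 0] absorbs the rest. *)
Lemma xlnxD_sub_le x d : 0 <= x -> 0 <= d -> x + d <= 1 -> xlnx (x + d) - xlnx x <= d.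
Proof.
move=> x0 d0 xd1; have ln_xd : ln (x + d) <= 0 by apply: ln_le0.
move: x0; rewrite le0r => /orP[/eqP x0|x0].
  rewrite x0 xlnx0 subr0 add0r in ln_xd *.
  move: d0; rewrite le0r => /orP[/eqP->|d0]; first by rewrite xlnx0.
  have : d * ln d <= 0 by rewrite mulr_ge0_le0 // ltW.
  rewrite gt0_xlnx //; lra.
have xd0 : 0 < x + d by rewrite ltr_wpDr.
have x_ln : x * (ln (x + d) - ln x) <= d.
  have := ler_wpM2l (ltW x0) (ln_sub_le x0 xd0).
  by rewrite addrAC subrr add0r mulrCA divff ?gt_eqF // mulr1.
have : d * ln (x + d) <= 0 by rewrite mulr_ge0_le0.
by rewrite !gt0_xlnx // mulrBr mulrDl in x_ln *; lra.
Qed.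

Definition entropy_modulus x := x - xlnx x.

Lemma entropy_modulus0 : entropy_modulus 0 = 0.
Proof. by rewrite /entropy_modulus xlnx0 subr0. Qed.

Lemma entropy_modulus_homo c d : 0 <= d -> d <= c -> c <= 1 ->
  entropy_modulus d <= entropy_modulus c.
Proof.
move=> d0 dc c1; have := @xlnxD_sub_le d (c - d) d0.
rewrite subr_ge0 addrC subrK /entropy_modulus => /(_ dc c1); lra.
Qed.

Lemma entropy_modulusD_le a b : 0 <= a -> 0 <= b ->
  entropy_modulus (a + b) <= entropy_modulus a + entropy_modulus b.
Proof. by move=> a0 b0; have := xlnxD_ge a0 b0; rewrite /entropy_modulus; lra. Qed.

Lemma hb_dist_le_sub a b : 0 <= a -> a <= b -> b <= 1 ->
  `|hb b - hb a| <= entropy_modulus (b - a).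
Proof.
move=> a0 ab b1; set d := b - a.
have d0 : 0 <= d by rewrite subr_ge0.
have b_ad : b = a + d by rewrite /d addrC subrK.
have a1_bd : 1 - b + d = 1 - a by rewrite /d; lra.
have b1' : 0 <= 1 - b by lra.
have := xlnxD_ge a0 d0; have := xlnxD_ge b1' d0.
have := xlnxD_sub_le a0 d0; have := xlnxD_sub_le b1' d0.
rewrite a1_bd -b_ad /hb /entropy_modulus ler_norml.
move=> /(_ ltac:(lra)) ? /(_ ltac:(lra)) ? ? ?; apply/andP; split; lra.
Qed.

Lemma hb_dist_le a b : 0 <= a <= 1 -> 0 <= b <= 1 ->
  `|hb b - hb a| <= entropy_modulus `|b - a|.
Proof.
move=> /andP[a0 a1] /andP[b0 b1]; have [ab|ba] := leP a b.
  by rewrite [`|b - a|]ger0_norm ?subr_ge0 // hb_dist_le_sub.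
rewrite (distrC (hb b)) [`|b - a|]ltr0_norm ?subr_lt0 // (opprB b a).
exact: hb_dist_le_sub (ltW ba) a1.
Qed.

Lemma entropy_modulus_sqrt_le x : 0 < x -> x <= 1 ->
  entropy_modulus (4 * Num.sqrt x) <= Num.sqrt (12 * x) * ln x^-1.
Proof.
move=> x0 x1; have sq : x = Num.sqrt x ^+ 2 by rewrite sqr_sqrtr // ltW.
have a0 : 0 < Num.sqrt x by rewrite sqrtr_gt0.
have a1 : Num.sqrt x <= 1 by rewrite -sqrtr1 ler_wsqrtr.
rewrite {2 3}sq; move: a0 a1; set a := Num.sqrt x => a0 a1.
rewrite sqrtrM ?sqrtr_sqr ?(ger0_norm (ltW a0)); last lra.
rewrite lnV ?posrE ?exprn_gt0 // lnXn // /entropy_modulus gt0_xlnx; last lra.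
rewrite lnM ?posrE //.
have ln_a : ln a <= 0 by apply: ln_le0.
have sqrt12 : 2 <= Num.sqrt (12 : R).
  have : Num.sqrt (12 : R) ^+ 2 = 12 by rewrite sqr_sqrtr.
  have := sqrtr_ge0 (12 : R); nra.
have : 0 <= - (a * ln a) by rewrite oppr_ge0 mulr_ge0_le0 // ltW.
have := ln4_ge1 R; rewrite mulr2n; nra.
Qed.

Lemma entropy_modulus_ln_le L N : 1 <= L -> L <= N ->
  entropy_modulus (10 * (L / N)) <= 18 * L * ln N / N.
Proof.
move=> L1 LN; have N0 : 0 < N by lra.
have r0 : 0 < L / N by rewrite divr_gt0 //; lra.
have ln_r : ln (10 * (L / N)) = ln 10 + ln L - ln N.
  by rewrite lnM ?ln_div ?posrE ?addrA //; lra.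
rewrite /entropy_modulus gt0_xlnx ?ln_r; last by rewrite mulr_gt0.
have -> : 18 * L * ln N / N = 18 * (L / N) * ln N by rewrite mulrAC !mulrA.
have : 1 <= ln (10 : R) by apply: (le_trans (ln4_ge1 R)); apply: ln_ler_pos; lra.
have : 0 <= ln L by apply: ln_ge0.
have : 0 <= ln N by apply: ln_ge0; lra.
nra.
Qed.

End EntropyModulus.

Lemma hb_dist_le_UCD_ber (R : realType) (p q delta : R) (n : nat) :
  0 <= p <= 1 -> 0 <= q <= 1 ->
  1 <= ln (6 / delta) -> 100 * ln (6 / delta) <= n%:R ->
  (n%:R * (q - p)) ^+ 2 <= 8 * ln (6 / delta) * (n%:R * p + 2 * ln (6 / delta)) ->
  `|hb q - hb p| <= UCD_ber q delta n.
Proof.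
move=> p01 q01; have /andP[p0 p1] := p01; have /andP[q0 q1] := q01; rewrite /UCD_ber.
set L := ln _; set N : R := n%:R => L1 NL dev.
have N0 : 0 < N by lra.
set r := L / N.
have r0 : 0 < r by rewrite divr_gt0 //; lra.
have r_small : r <= 1 / 100 by rewrite ler_pdivrMr //; lra.
have rq0 : 0 <= r * q by rewrite mulr_ge0 // ltW.
set a := Num.sqrt (r * q).
have a0 : 0 <= a := sqrtr_ge0 _.
have a2 : a ^+ 2 = r * q by rewrite sqr_sqrtr.
have a_small : a <= 1 / 10 by nra.
have dev_qp : `|q - p| <= 4 * a + 10 * r.
  apply: empirical_dev_le => //.
  have N2 : 0 < N ^+ 2 by rewrite exprn_gt0.
  rewrite -(ler_pM2l N2) -exprMn.
  suff -> : N ^+ 2 * (8 * r * (p + 2 * r)) = 8 * L * (N * p + 2 * L) by [].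
  by rewrite /r; field; rewrite gt_eqF.
apply: (le_trans (hb_dist_le p01 q01)).
apply: (le_trans (entropy_modulus_homo (normr_ge0 _) dev_qp _)); first lra.
apply: (le_trans (entropy_modulusD_le _ _)); [lra | lra | apply: lerD].
  have [q_eq0 | q_neq0] := eqVneq q 0.
    by rewrite /a q_eq0 mulr0 sqrtr0 mulr0 entropy_modulus0.
  have q_gt0 : 0 < q by rewrite lt_neqAle eq_sym q_neq0.
  have -> : 12 * q * L / N = 12 * (r * q) by rewrite /r; field; rewrite gt_eqF.
  have -> : N / (q * L) = (r * q)^-1 by rewrite /r; field; rewrite !gt_eqF //; lra.
  apply: entropy_modulus_sqrt_le; last nra.
  by rewrite mulr_gt0.
by apply: entropy_modulus_ln_le; lra.
Qed.

Lemma expR_le_quadratic (R : realType) (u : R) : u <= 1 / 2 -> expR u <= 1 + u + 2 * u ^+ 2.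
Proof.
move=> u_small; have e0 : 0 < expR u := expR_gt0 u.
have : (1 - u) * expR u <= 1.
  have := ler_wpM2r (ltW e0) (expR_ge1Dx (- u)).
  by rewrite expRN mulVf ?gt_eqF.
have : 0 <= u ^+ 2 * (1 - 2 * u) by rewrite mulr_ge0 ?sqr_ge0 //; lra.
nra.
Qed.

Definition nsucc {R : realType} {n : nat} (y : {ffun 'I_n -> bool}) : R :=
  \sum_(l < n) (y l : nat)%:R.

Section Bernoulli.
Variables (R : realType) (p : R) (n : nat).
Hypotheses (p_ge0 : 0 <= p) (p_le1 : p <= 1).
Local Notation sample := {ffun 'I_n -> bool}.
Implicit Types (A B C : pred sample) (y : sample).

Lemma phatE y : phat y = nsucc y / n%:R :> R.
Proof. by []. Qed.

Lemma nsuccE y : (0 < n)%N -> nsucc y = n%:R * phat y :> R.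
Proof. by move=> n_gt0; rewrite phatE mulrC divfK // pnatr_eq0 -lt0n. Qed.

Lemma nsucc_ge0 y : 0 <= nsucc y :> R.
Proof. by apply: sumr_ge0 => l _; exact: ler0n. Qed.

Lemma nsucc_le y : nsucc y <= n%:R :> R.
Proof.
rewrite /nsucc -[X in _ <= X%:R]card_ord -sum1_card natr_sum.
by apply: ler_sum => l _; case: (y l).
Qed.

Lemma phat_itv y : 0 <= (phat y : R) <= 1.
Proof.
rewrite phatE; have [n0 | n_gt0] := posnP n.
  by rewrite [n%:R](_ : _ = 0) ?n0 // invr0 mulr0 lexx ler01.
rewrite divr_ge0 ?nsucc_ge0 //= ler_pdivrMr ?ltr0n // mul1r.
exact: nsucc_le.
Qed.

Lemma bern_weight_ge0 y : 0 <= bern_weight p y.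
Proof. by apply: prodr_ge0 => l _; case: (y l); rewrite ?subr_ge0. Qed.

Lemma bern_mgf x :
  \sum_(y : sample) bern_weight p y * expR (x * nsucc y) = (p * expR x + (1 - p)) ^+ n.
Proof.
transitivity (\sum_(y : sample) \prod_(l < n) (if y l then p * expR x else 1 - p)).
  apply: eq_bigr => y _.
  rewrite /nsucc mulr_sumr expR_sum /bern_weight -big_split /=.
  by apply: eq_bigr => l _; case: (y l); rewrite /= ?mulr1 ?mulr0 ?expR0 ?mulr1.
rewrite -(bigA_distr_bigA (fun l (b : bool) => if b then p * expR x else 1 - p)) /=.
under eq_bigr do rewrite big_bool.
by rewrite prodr_const card_ord.
Qed.

Lemma bern_weight_sum : \sum_(y : sample) bern_weight p y = 1.
Proof.
have := bern_mgf 0; rewrite expR0 mulr1 subrKC expr1n => <-.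
by apply: eq_bigr => y _; rewrite mul0r expR0 mulr1.
Qed.

Lemma bern_probC A : bern_prob p (fun y => ~~ A y) = 1 - bern_prob p A.
Proof. by rewrite /bern_prob -bern_weight_sum [in RHS](bigID A) /= addrAC subrr add0r. Qed.

Lemma bern_prob_le_union A B C : (forall y, A y -> B y || C y) ->
  bern_prob p A <= bern_prob p B + bern_prob p C.
Proof.
move=> sub; rewrite /bern_prob (big_mkcond A) (big_mkcond B) (big_mkcond C) -big_split /=.
apply: ler_sum => y _; have w0 := bern_weight_ge0 y.
have [/sub /orP[By | Cy] | _] := boolP (A y).
- by rewrite By; case: ifP => _; lra.
- by rewrite Cy; case: ifP => _; lra.
- by case: ifP => _; case: ifP => _; lra.
Qed.

Lemma bern_prob_le_sub A B : (forall y, A y -> B y) -> bern_prob p A <= bern_prob p B.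
Proof.
move=> sub; rewrite /bern_prob (big_mkcond A) (big_mkcond B) /=.
apply: ler_sum => y _; case: ifP => [/sub -> // | _].
by case: ifP => _; rewrite ?bern_weight_ge0.
Qed.

Lemma bern_mgf1_le u : u <= 1 / 2 -> p * expR u + (1 - p) <= expR (p * u + 2 * p * u ^+ 2).
Proof.
move=> u_small; apply: le_trans (expR_ge1Dx _).
have := ler_wpM2l p_ge0 (expR_le_quadratic u_small); lra.
Qed.

Lemma bern_centered_mgf_le u : u <= 1 / 2 ->
  \sum_(y : sample) bern_weight p y * expR (u * (nsucc y - n%:R * p))
    <= expR (2 * n%:R * p * u ^+ 2).
Proof.
move=> u_small.
under eq_bigr do rewrite mulrBr expRD mulrA mulrC.
rewrite -mulr_sumr bern_mgf.
have base0 : 0 <= p * expR u + (1 - p) by rewrite addr_ge0 ?subr_ge0 ?mulr_ge0 ?expR_ge0.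
have := lerXn2r n (x := p * expR u + (1 - p)) (y := expR (p * u + 2 * p * u ^+ 2)).
rewrite !nnegrE base0 expR_ge0 bern_mgf1_le // -expRM_natl => /(_ isT isT isT) pow_le.
apply: le_trans (ler_wpM2l (expR_ge0 _) pow_le) _.
by rewrite -expRD ler_expR; nra.
Qed.

Lemma bern_chernoff u c : u <= 1 / 2 ->
  bern_prob p (fun y => c <= u * (nsucc y - n%:R * p)) <= expR (2 * n%:R * p * u ^+ 2 - c).
Proof.
move=> u_small; rewrite /bern_prob.
apply: (@le_trans _ _ (\sum_(y : sample) bern_weight p y * expR (u * (nsucc y - n%:R * p) - c))).
  rewrite big_mkcond /=; apply: ler_sum => y _.
  case: ifP => [dev | _]; last by rewrite mulr_ge0 ?bern_weight_ge0 ?expR_ge0.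
  apply: ler_peMr; first exact: bern_weight_ge0.
  by rewrite -[X in X <= _]expR0 ler_expR subr_ge0.
under eq_bigr do rewrite expRD mulrA.
rewrite -mulr_suml expRD ler_wpM2r ?expR_ge0 //.
exact: bern_centered_mgf_le.
Qed.

Lemma bern_sqr_dev_tail L : 0 < L ->
  bern_prob p (fun y => 8 * L * (n%:R * p + 2 * L) < (nsucc y - n%:R * p) ^+ 2)
    <= 2 * expR (- L).
Proof.
move=> L0; set V := n%:R * p + 2 * L.
have np0 : 0 <= n%:R * p by rewrite mulr_ge0.
have V0 : 0 < V by rewrite /V; lra.
(* The Chernoff parameter [t] is tuned to the variance proxy [V >= n p]. *)
set t := Num.sqrt (L / (2 * V)).
have t0 : 0 <= t := sqrtr_ge0 _.
have V2 : 0 < 2 * V by rewrite mulr_gt0.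
have tV : t ^+ 2 * (2 * V) = L by rewrite sqr_sqrtr ?divfK ?gt_eqF // divr_ge0 // ltW.
have t2_small : t ^+ 2 <= 1 / 4 by rewrite -(ler_pM2r V2) tV /V; lra.
have t_small : t <= 1 / 2 by nra.
have tail_le : expR (2 * n%:R * p * t ^+ 2 - 2 * L) <= expR (- L).
  have : 2 * (n%:R * p) * t ^+ 2 <= L by rewrite -[X in _ <= X]tV /V; have := sqr_ge0 t; nra.
  rewrite ler_expR; lra.
have t_gt0 : 0 < t.
  by rewrite lt_neqAle t0 andbT; apply/eqP => t_eq0; move: tV; rewrite -t_eq0; lra.
have right_tail := le_trans (bern_chernoff (2 * L) t_small) tail_le.
have left_tail : bern_prob p (fun y => 2 * L <= - t * (nsucc y - n%:R * p)) <= expR (- L).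
  have mt_small : - t <= 1 / 2 by lra.
  by apply: (le_trans (bern_chernoff (2 * L) mt_small)); rewrite sqrrN.
have -> : 2 * expR (- L) = expR (- L) + expR (- L) by lra.
apply: (le_trans _ (lerD right_tail left_tail)).
apply: bern_prob_le_union => y; set D := nsucc y - n%:R * p => dev.
have : 4 * L * (t ^+ 2 * (2 * V)) < t ^+ 2 * D ^+ 2.
  by rewrite -(ltr_pM2l (exprn_gt0 2 t_gt0)) in dev; nra.
rewrite tV => tD; have [D0 | D0] := leP 0 D; apply/orP; [left | right].
  have : 0 <= t * D by rewrite mulr_ge0 // ltW.
  nra.
have : 0 <= - t * D by rewrite mulNr oppr_ge0 mulr_ge0_le0 // ltW.
nra.
Qed.

End Bernoulli.

Theorem proposition2 (R : realType) (p delta : R) (n : nat) :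
  0 <= p -> p <= 1 / 2 ->
  0 < delta -> delta <= 1 / 2 ->
  200 * ln (4 / delta) <= n%:R ->
  1 - delta <
    bern_prob p
      (fun y : {ffun 'I_n -> bool} =>
         `|hb (phat y) - hb p| <= UCD_ber (phat y) delta n).
Proof.
move=> p_ge0 p_small delta_gt0 delta_small n_large.
have p_le1 : p <= 1 by lra.
have /andP[L_ge1 L_le] := ln_6_div_bounds delta_gt0 delta_small.
set L := ln (6 / delta) in L_ge1 L_le *.
have n_gt0 : (0 < n)%N by rewrite -(ltr0n R); lra.
have L_gt0 : 0 < L by lra.
have ucd_of_dev (y : {ffun 'I_n -> bool}) :
    ~~ (8 * L * (n%:R * p + 2 * L) < (nsucc y - n%:R * p) ^+ 2) ->
    `|hb (phat y) - hb p| <= UCD_ber (phat y) delta n.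
  rewrite -leNgt nsuccE // -mulrBr => dev.
  by apply: hb_dist_le_UCD_ber; rewrite ?phat_itv ?p_ge0 ?p_le1 // -/L; lra.
apply: (lt_le_trans _ (bern_prob_le_sub p_ge0 p_le1 ucd_of_dev)).
rewrite bern_probC; have := bern_sqr_dev_tail n p_ge0 p_le1 L_gt0.
rewrite expRN lnK ?posrE ?divr_gt0 // invf_div; lra.
Qed.
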